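(* Let $\Omega\subset\mathbb{R}^3$ be open, $T>0$, and let $A:[0,T]\times\Omega\to\mathbb{T}$ and $\gamma:[0,T]\times\Omega\to\mathbb{S}$ be sufficiently smooth (classical) fields solving $$\operatorname{div} A=0,\qquad A_t+\operatorname{curl} S\gamma=0,\qquad S\gamma_t-\operatorname{sym}\operatorname{curl} A=0,\qquad \operatorname{div}\operatorname{div} S\gamma=0 .$$ Let $A_0:=A(0)$ and $\beta(t):=\tfrac12\int_0^t\operatorname{div}S\gamma(s)\,ds+\operatorname{vskw}A_0$. Then $$\operatorname{div}S\gamma_t=2\operatorname{div}S\operatorname{def}\beta .$$
   Context: $\mathbb{M}$ is the space of real $3\times3$ matrices, $\mathbb{S}$ the symmetric ones, $\mathbb{T}$ the trace-free ones. For $M\in\mathbb{M}$: $S(M):=M^\top-\operatorname{tr}(M)I$; $\operatorname{sym}M$ is the symmetric part; $(\operatorname{vskw}M)_i:=-\tfrac12\epsilon_{ijk}M_{jk}$ (Levi-Civita symbol, summation convention). Differential operators act column-wise on matrix fields: $(\operatorname{curl}M)_{ij}=\epsilon_{ikl}\partial_kM_{lj}$, $(\operatorname{div}M)_i=\partial_jM_{ji}$; for a vector field $v$, $(\operatorname{curl}v)_i=\epsilon_{ijk}\partial_jv_k$, $(\operatorname{grad}v)_{ij}=\partial_iv_j$, $\operatorname{def}v:=\operatorname{sym}\operatorname{grad}v$; $\operatorname{div}\operatorname{div}\sigma:=\operatorname{div}(\operatorname{div}\sigma)$. Subscript $t$ denotes time derivative. *)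

From Stdlib Require Import Reals Lra.
From Coquelicot Require Import Coquelicot.
Open Scope R_scope.

Inductive idx : Type := I0 | I1 | I2.

Definition idx_eq_dec (i j : idx) : {i = j} + {i <> j}.
Proof. decide equality. Defined.

Definition sum3 (f : idx -> R) : R := f I0 + f I1 + f I2.

Definition pt := idx -> R.
Definition vec := idx -> R.
Definition mat := idx -> idx -> R.

Definition levi (i j k : idx) : R :=
  match i, j, k with
  | I0, I1, I2 => 1 | I1, I2, I0 => 1 | I2, I0, I1 => 1
  | I0, I2, I1 => -1 | I2, I1, I0 => -1 | I1, I0, I2 => -1
  | _, _, _ => 0
  end.

Definition kron (i j : idx) : R := if idx_eq_dec i j then 1 else 0.
Definition mtr (M : mat) : R := sum3 (fun i => M i i).
Definition Sop (M : mat) : mat := fun i j => M j i - mtr M * kron i j.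
Definition msym (M : mat) : mat := fun i j => (M i j + M j i) / 2.
Definition vskw (M : mat) : vec :=
  fun i => - (1/2) * sum3 (fun j => sum3 (fun k => levi i j k * M j k)).

Definition sfield := R -> pt -> R.
Definition vfield := R -> pt -> vec.
Definition mfield := R -> pt -> mat.

Definition upd (x : pt) (k : idx) (s : R) : pt :=
  fun j => if idx_eq_dec k j then s else x j.

Definition dsp (k : idx) (f : sfield) : sfield :=
  fun t x => Derive (fun s => f t (upd x k s)) (x k).
Definition dtime (f : sfield) : sfield :=
  fun t x => Derive (fun s => f s x) t.

(** Column-wise differential operators (as in the paper's conventions). *)
Definition mdiv (M : mfield) : vfield :=
  fun t x i => sum3 (fun j => dsp j (fun t x => M t x j i) t x).
Definition mcurl (M : mfield) : mfield :=
  fun t x i j => sum3 (fun k => sum3 (fun l =>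
     levi i k l * dsp k (fun t x => M t x l j) t x)).
Definition vdiv (v : vfield) : sfield :=
  fun t x => sum3 (fun i => dsp i (fun t x => v t x i) t x).
Definition vgrad (v : vfield) : mfield :=
  fun t x i j => dsp i (fun t x => v t x j) t x.
Definition vdef (v : vfield) : mfield := fun t x => msym (vgrad v t x).
Definition divdiv (M : mfield) : sfield := vdiv (mdiv M).
Definition mdt (M : mfield) : mfield :=
  fun t x i j => dtime (fun t x => M t x i j) t x.
Definition vdt (v : vfield) : vfield :=
  fun t x i => dtime (fun t x => v t x i) t x.

Definition Sf (M : mfield) : mfield := fun t x => Sop (M t x).
Definition symf (M : mfield) : mfield := fun t x => msym (M t x).

Definition open3 (O : pt -> Prop) : Prop :=
  forall x, O x -> exists eps, 0 < eps /\
    forall y, (forall i, Rabs (y i - x i) < eps) -> O y.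
Definition open4 (U : R -> pt -> Prop) : Prop :=
  forall t x, U t x -> exists eps, 0 < eps /\
    forall s y, Rabs (s - t) < eps -> (forall i, Rabs (y i - x i) < eps) -> U s y.

Definition cont_at (f : sfield) (t : R) (x : pt) : Prop :=
  forall eps, 0 < eps -> exists del, 0 < del /\
    forall s y, Rabs (s - t) < del -> (forall i, Rabs (y i - x i) < del) ->
      Rabs (f s y - f t x) < eps.

Inductive dir : Type := DT | DX (k : idx).
Definition pd (d : dir) (f : sfield) : sfield :=
  match d with DT => dtime f | DX k => dsp k f end.
Fixpoint pds (l : list dir) (f : sfield) : sfield :=
  match l with nil => f | cons d l' => pd d (pds l' f) end.

Definition smooth_on (U : R -> pt -> Prop) (f : sfield) : Prop :=
  forall (l : list dir) t x, U t x ->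
    cont_at (pds l f) t x /\
    ex_derive (fun s => pds l f s x) t /\
    (forall k, ex_derive (fun s => pds l f t (upd x k s)) (x k)).

From Stdlib Require Import Reals Lra List FunctionalExtensionality.
From Coquelicot Require Import Coquelicot.
Import ListNotations.
Open Scope R_scope.

(* Put w := div A^T.  Because div curl M = 0 and div (curl M)^T = curl div M^T,
   2 div sym curl A = curl w; because 2 div S def v = - curl curl v for every
   vector field v, it suffices to show w = -2 curl beta.  At t = 0 this is
   2 curl vskw A = div A - div A^T together with div A = 0.  In time,
   w_t = div (A_t)^T = - div (curl S gamma)^T = - curl div S gamma, the last step
   because S gamma is symmetric, and this is -2 (curl beta)_t. *)

Lemma upd_at x k r : upd x k r k = r.
Proof. unfold upd; destruct (idx_eq_dec k k); congruence. Qed.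

Lemma upd_ne x k r j : k <> j -> upd x k r j = x j.
Proof. intros; unfold upd; destruct (idx_eq_dec k j); congruence. Qed.

Lemma upd_upd x k a b : upd (upd x k a) k b = upd x k b.
Proof.
  apply functional_extensionality; intro j; unfold upd.
  destruct (idx_eq_dec k j); reflexivity.
Qed.

Lemma upd_self x k : upd x k (x k) = x.
Proof.
  apply functional_extensionality; intro j; unfold upd.
  destruct (idx_eq_dec k j); subst; reflexivity.
Qed.

Lemma upd_comm x k m a b : k <> m -> upd (upd x k a) m b = upd (upd x m b) k a.
Proof.
  intro H; apply functional_extensionality; intro j; unfold upd.
  destruct (idx_eq_dec m j), (idx_eq_dec k j); subst; congruence.
Qed.

Definition move_t (d : dir) (t r : R) : R := match d with DT => r | DX _ => t end.
Definition move_x (d : dir) (x : pt) (r : R) : pt :=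
  match d with DT => x | DX k => upd x k r end.
Definition coord (d : dir) (t : R) (x : pt) : R :=
  match d with DT => t | DX k => x k end.

Lemma pd_line d f t x :
  pd d f t x = Derive (fun r => f (move_t d t r) (move_x d x r)) (coord d t x).
Proof. destruct d; reflexivity. Qed.

Lemma move_t_move d t u r : move_t d (move_t d t u) r = move_t d t r.
Proof. destruct d; reflexivity. Qed.

Lemma move_x_move d x u r : move_x d (move_x d x u) r = move_x d x r.
Proof. destruct d; simpl; auto using upd_upd. Qed.

Lemma coord_move d t x u : coord d (move_t d t u) (move_x d x u) = u.
Proof. destruct d; simpl; auto using upd_at. Qed.

Lemma coord_move_other d1 d2 t x u : d1 <> d2 ->
  coord d2 (move_t d1 t u) (move_x d1 x u) = coord d2 t x.
Proof. intro H; destruct d1, d2; simpl; auto; try congruence. apply upd_ne; congruence. Qed.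

Lemma move_t_coord d t x : move_t d t (coord d t x) = t.
Proof. destruct d; reflexivity. Qed.

Lemma move_x_coord d t x : move_x d x (coord d t x) = x.
Proof. destruct d; simpl; auto using upd_self. Qed.

Lemma move_t_comm d1 d2 t u v : d1 <> d2 ->
  move_t d1 (move_t d2 t v) u = move_t d2 (move_t d1 t u) v.
Proof. intro H; destruct d1, d2; simpl; auto; congruence. Qed.

Lemma move_x_comm d1 d2 x u v : d1 <> d2 ->
  move_x d1 (move_x d2 x v) u = move_x d2 (move_x d1 x u) v.
Proof. intro H; destruct d1, d2; simpl; auto. apply upd_comm; congruence. Qed.

Lemma pd_line_at d g t x u :
  Derive (fun r => g (move_t d t r) (move_x d x r)) u
  = pd d g (move_t d t u) (move_x d x u).
Proof.
  rewrite pd_line, coord_move; apply Derive_ext; intro r.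
  rewrite move_t_move, move_x_move; reflexivity.
Qed.

Definition near (e t : R) (x : pt) (s : R) (y : pt) : Prop :=
  Rabs (s - t) < e /\ forall i, Rabs (y i - x i) < e.

Lemma near_refl e t x : 0 < e -> near e t x t x.
Proof. intros; split; [|intros]; rewrite Rminus_diag, Rabs_R0; auto. Qed.

Lemma near_move e t x s y d r : near e t x s y -> Rabs (r - coord d t x) < e ->
  near e t x (move_t d s r) (move_x d y r).
Proof.
  intros [H1 H2] Hr; destruct d as [|k]; simpl in *; split; auto.
  intro i; unfold upd; destruct (idx_eq_dec k i); subst; auto.
Qed.

Lemma near_move2 e t x d1 d2 u v : 0 < e ->
  Rabs (u - coord d1 t x) < e -> Rabs (v - coord d2 t x) < e ->
  near e t x (move_t d2 (move_t d1 t u) v) (move_x d2 (move_x d1 x u) v).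
Proof. intros. apply near_move; auto. apply near_move; auto. apply near_refl; auto. Qed.

Lemma open4_near U t x : open4 U -> U t x ->
  exists e, 0 < e /\ forall s y, near e t x s y -> U s y.
Proof.
  intros HU Ht; destruct (HU t x Ht) as [e [He H]].
  exists e; split; auto; intros s y [Hs Hy]; auto.
Qed.

Lemma open3_line Om x k : open3 Om -> Om x -> locally (x k) (fun r => Om (upd x k r)).
Proof.
  intros HO Hx; destruct (HO x Hx) as [e [He H]].
  exists (mkposreal e He); intros r Hr; apply H; intro i.
  unfold upd; destruct (idx_eq_dec k i); subst; [exact Hr|].
  rewrite Rminus_diag, Rabs_R0; auto.
Qed.

(** * Partial derivatives along coordinate lines *)

Definition ex_dsp (k : idx) (f : sfield) (t : R) (x : pt) : Prop :=
  ex_derive (fun r => f t (upd x k r)) (x k).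

Definition partials_exist (f : sfield) (t : R) (x : pt) : Prop :=
  forall k, ex_dsp k f t x.

Definition symmetric_hessian (f : sfield) (t : R) (x : pt) : Prop :=
  (forall a, partials_exist (dsp a f) t x) /\
  (forall a b, dsp a (dsp b f) t x = dsp b (dsp a f) t x).

Lemma dsp_plus k f g t x : ex_dsp k f t x -> ex_dsp k g t x ->
  dsp k (fun t y => f t y + g t y) t x = dsp k f t x + dsp k g t x.
Proof. intros Hf Hg; unfold dsp; apply Derive_plus; assumption. Qed.

Lemma dsp_minus k f g t x : ex_dsp k f t x -> ex_dsp k g t x ->
  dsp k (fun t y => f t y - g t y) t x = dsp k f t x - dsp k g t x.
Proof. intros Hf Hg; unfold dsp; apply Derive_minus; assumption. Qed.

Lemma dsp_scal k c f t x : dsp k (fun t y => c * f t y) t x = c * dsp k f t x.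
Proof. unfold dsp; apply Derive_scal. Qed.

Lemma dsp_scal_r k c f t x : dsp k (fun t y => f t y * c) t x = dsp k f t x * c.
Proof. unfold dsp; apply Derive_scal_l. Qed.

Lemma dsp_opp k f t x : dsp k (fun t y => - f t y) t x = - dsp k f t x.
Proof. unfold dsp; apply Derive_opp. Qed.

Lemma ex_dsp_plus k f g t x : ex_dsp k f t x -> ex_dsp k g t x ->
  ex_dsp k (fun t y => f t y + g t y) t x.
Proof. apply (ex_derive_plus (fun r => f t (upd x k r)) (fun r => g t (upd x k r))). Qed.

Lemma ex_dsp_minus k f g t x : ex_dsp k f t x -> ex_dsp k g t x ->
  ex_dsp k (fun t y => f t y - g t y) t x.
Proof. apply (ex_derive_minus (fun r => f t (upd x k r)) (fun r => g t (upd x k r))). Qed.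

Lemma ex_dsp_scal k c f t x : ex_dsp k f t x -> ex_dsp k (fun t y => c * f t y) t x.
Proof. apply (ex_derive_scal (fun r => f t (upd x k r))). Qed.

Lemma ex_dsp_scal_r k c f t x : ex_dsp k f t x -> ex_dsp k (fun t y => f t y * c) t x.
Proof.
  intro Hf; apply (ex_derive_ext (fun r => c * f t (upd x k r))).
  - intro r; apply Rmult_comm.
  - apply ex_derive_scal, Hf.
Qed.

Lemma dsp_local Om k f g t x : open3 Om -> Om x ->
  (forall y, Om y -> f t y = g t y) -> dsp k f t x = dsp k g t x.
Proof.
  intros HO Hx Hfg; unfold dsp; apply Derive_ext_loc.
  generalize (open3_line Om x k HO Hx); apply filter_imp; auto.
Qed.

(* These tactics match syntactically and use fully instantiated lemmas:
   unification modulo conversion would unfold the real-number operations and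
   does not terminate in practice.  [eta2] keeps second derivatives in the form
   [dsp a (dsp b f)], which the symmetry hypotheses rewrite. *)
Ltac eta2 f := lazymatch f with (fun t y => ?h t y) => h | _ => f end.

Ltac solve_ex_dsp :=
  repeat match goal with
  | |- ex_dsp ?k (fun t y => @?f t y + @?g t y) ?s ?z => apply (ex_dsp_plus k f g s z)
  | |- ex_dsp ?k (fun t y => @?f t y - @?g t y) ?s ?z => apply (ex_dsp_minus k f g s z)
  | |- ex_dsp ?k (fun t y => ?c * @?f t y) ?s ?z => apply (ex_dsp_scal k c f s z)
  | |- ex_dsp ?k (fun t y => @?f t y * ?c) ?s ?z => apply (ex_dsp_scal_r k c f s z)
  end;
  auto.

Ltac expand_dsp :=
  unfold Rdiv;
  repeat match goal with
  | |- context [dsp ?k (fun t y => @?f t y + @?g t y) ?s ?z] =>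
      let f := eta2 f in let g := eta2 g in
      rewrite (dsp_plus k f g s z) by solve_ex_dsp
  | |- context [dsp ?k (fun t y => @?f t y - @?g t y) ?s ?z] =>
      let f := eta2 f in let g := eta2 g in
      rewrite (dsp_minus k f g s z) by solve_ex_dsp
  | |- context [dsp ?k (fun t y => ?c * @?f t y) ?s ?z] =>
      let f := eta2 f in rewrite (dsp_scal k c f s z)
  | |- context [dsp ?k (fun t y => @?f t y * ?c) ?s ?z] =>
      let f := eta2 f in rewrite (dsp_scal_r k c f s z)
  end.

Ltac eval_coeffs :=
  cbv beta iota delta [levi kron idx_eq_dec idx_rec idx_rect].

(** * Vector calculus identities *)

Definition vcurl (v : vfield) : vfield :=
  fun t x i => sum3 (fun k => sum3 (fun l => levi i k l * dsp k (fun t x => v t x l) t x)).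

Definition mtrans (M : mfield) : mfield := fun t x i j => M t x j i.

Lemma sum3_ext (f g : idx -> R) : (forall i, f i = g i) -> sum3 f = sum3 g.
Proof. intro H; unfold sum3; rewrite !H; reflexivity. Qed.

Lemma kron_sym i j : kron i j = kron j i.
Proof. destruct i, j; reflexivity. Qed.

Lemma Derive_sum3 (f : idx -> R -> R) r : (forall i, ex_derive (f i) r) ->
  Derive (fun s => sum3 (fun i => f i s)) r = sum3 (fun i => Derive (f i) r).
Proof.
  intro H; unfold sum3.
  rewrite Derive_plus, Derive_plus; auto.
  apply (ex_derive_plus (f I0) (f I1)); auto.
Qed.

Lemma mdiv_local Om (M M' : mfield) t x i : open3 Om -> Om x ->
  (forall y, Om y -> forall a b, M t y a b = M' t y a b) -> mdiv M t x i = mdiv M' t x i.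
Proof.
  intros HO Hx H; apply sum3_ext; intro j.
  apply (dsp_local Om); auto.
Qed.

Lemma vcurl_local Om (v v' : vfield) t x i : open3 Om -> Om x ->
  (forall y, Om y -> forall a, v t y a = v' t y a) -> vcurl v t x i = vcurl v' t x i.
Proof.
  intros HO Hx H; apply sum3_ext; intro k; apply sum3_ext; intro l.
  f_equal; apply (dsp_local Om); auto.
Qed.

Lemma mdiv_opp (M : mfield) t x i :
  mdiv (fun t y a b => - M t y a b) t x i = - mdiv M t x i.
Proof. unfold mdiv, sum3; rewrite !dsp_opp; ring. Qed.

Lemma vcurl_scal c (v : vfield) t x i :
  vcurl (fun t y a => c * v t y a) t x i = c * vcurl v t x i.
Proof. unfold vcurl, sum3; rewrite !dsp_scal; ring. Qed.

Section Identities.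

Variables (t : R) (x : pt).

Lemma vcurl_vskw (M : mfield) i :
  (forall l m, partials_exist (fun t y => M t y l m) t x) ->
  2 * vcurl (fun t y => vskw (M t y)) t x i = mdiv M t x i - mdiv (mtrans M) t x i.
Proof.
  intro HM.
  assert (Hex : forall k l m, ex_dsp k (fun t y => M t y l m) t x) by (intros; apply HM).
  unfold vcurl, vskw, mdiv, mtrans, sum3.
  expand_dsp.
  destruct i; eval_coeffs; field.
Qed.

Lemma mdiv_symf_mcurl (M : mfield) i :
  (forall l m, symmetric_hessian (fun t y => M t y l m) t x) ->
  2 * mdiv (symf (mcurl M)) t x i = vcurl (mdiv (mtrans M)) t x i.
Proof.
  intro HM.
  assert (Hex : forall a b l m, ex_dsp a (dsp b (fun t y => M t y l m)) t x)
    by (intros; apply HM).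
  assert (Hsym : forall a b l m, dsp a (dsp b (fun t y => M t y l m)) t x
                              = dsp b (dsp a (fun t y => M t y l m)) t x)
    by (intros; apply HM).
  unfold vcurl, mdiv, symf, msym, mcurl, mtrans, sum3.
  expand_dsp.
  destruct i; eval_coeffs;
    rewrite ?(Hsym I1 I0), ?(Hsym I2 I0), ?(Hsym I2 I1); field.
Qed.

Lemma mdiv_mtrans_mcurl (M : mfield) i :
  (forall l m, symmetric_hessian (fun t y => M t y l m) t x) ->
  mdiv (mtrans (mcurl M)) t x i = vcurl (mdiv (mtrans M)) t x i.
Proof.
  intro HM.
  assert (Hex : forall a b l m, ex_dsp a (dsp b (fun t y => M t y l m)) t x)
    by (intros; apply HM).
  assert (Hsym : forall a b l m, dsp a (dsp b (fun t y => M t y l m)) t x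
                              = dsp b (dsp a (fun t y => M t y l m)) t x)
    by (intros; apply HM).
  unfold vcurl, mdiv, mcurl, mtrans, sum3.
  expand_dsp.
  destruct i; eval_coeffs;
    rewrite ?(Hsym I1 I0), ?(Hsym I2 I0), ?(Hsym I2 I1); ring.
Qed.

Lemma mdiv_Sf_vdef (v : vfield) i :
  (forall l, symmetric_hessian (fun t y => v t y l) t x) ->
  2 * mdiv (Sf (vdef v)) t x i = - vcurl (vcurl v) t x i.
Proof.
  intro Hv.
  assert (Hex : forall a b l, ex_dsp a (dsp b (fun t y => v t y l)) t x)
    by (intros; apply Hv).
  assert (Hsym : forall a b l, dsp a (dsp b (fun t y => v t y l)) t x
                            = dsp b (dsp a (fun t y => v t y l)) t x)
    by (intros; apply Hv).
  unfold vcurl, mdiv, Sf, vdef, Sop, msym, mtr, vgrad, sum3.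
  expand_dsp.
  destruct i; eval_coeffs;
    rewrite ?(Hsym I1 I0), ?(Hsym I2 I0), ?(Hsym I2 I1); field.
Qed.

End Identities.

(** * Smooth fields *)

Lemma cont_lin a b f g t x : cont_at f t x -> cont_at g t x ->
  cont_at (fun s y => a * f s y + b * g s y) t x.
Proof.
  intros Hf Hg eps He.
  set (k := Rabs a + Rabs b + 1).
  assert (Hk : 0 < k) by (unfold k; generalize (Rabs_pos a) (Rabs_pos b); lra).
  set (q := eps / k).
  assert (Hq : 0 < q) by (apply Rdiv_lt_0_compat; auto).
  destruct (Hf q Hq) as [d1 [Hd1 H1]], (Hg q Hq) as [d2 [Hd2 H2]].
  exists (Rmin d1 d2); split; [apply Rmin_pos; auto|].
  intros s y Hs Hy.
  assert (Hs1 := Rlt_le_trans _ _ _ Hs (Rmin_l d1 d2)).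
  assert (Hs2 := Rlt_le_trans _ _ _ Hs (Rmin_r d1 d2)).
  specialize (H1 s y Hs1 (fun i => Rlt_le_trans _ _ _ (Hy i) (Rmin_l d1 d2))).
  specialize (H2 s y Hs2 (fun i => Rlt_le_trans _ _ _ (Hy i) (Rmin_r d1 d2))).
  replace (a * f s y + b * g s y - (a * f t x + b * g t x))
    with (a * (f s y - f t x) + b * (g s y - g t x)) by ring.
  eapply Rle_lt_trans; [apply Rabs_triang|]; rewrite !Rabs_mult.
  assert (B1 : Rabs a * Rabs (f s y - f t x) <= Rabs a * q)
    by (apply Rmult_le_compat_l; [apply Rabs_pos|lra]).
  assert (B2 : Rabs b * Rabs (g s y - g t x) <= Rabs b * q)
    by (apply Rmult_le_compat_l; [apply Rabs_pos|lra]).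
  assert (E : Rabs a * q + Rabs b * q + q = k * q) by (unfold k; ring).
  assert (Ek : k * q = eps) by (unfold q; field; lra).
  lra.
Qed.

Lemma cont_at_time h s x : cont_at h s x -> continuous (fun r => h r x) s.
Proof.
  intro H; apply filterlim_locally; intro eps.
  destruct (H eps (cond_pos eps)) as [d [Hd Hd']].
  exists (mkposreal d Hd); intros r Hr; apply Hd'; [exact Hr|].
  intro i; rewrite Rminus_diag, Rabs_R0; auto.
Qed.

Lemma continuity_2d_pt_ext (f g : R -> R -> R) u v : (forall u v, f u v = g u v) ->
  continuity_2d_pt f u v -> continuity_2d_pt g u v.
Proof.
  intros H; replace g with f; auto.
  do 2 (apply functional_extensionality; intro); auto.
Qed.

Lemma cont_at_slice g t x d1 d2 : cont_at g t x ->
  continuity_2d_pt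
    (fun u v => g (move_t d2 (move_t d1 t u) v) (move_x d2 (move_x d1 x u) v))
    (coord d1 t x) (coord d2 t x).
Proof.
  intros Hg eps; destruct (Hg eps (cond_pos eps)) as [de [Hde H]].
  exists (mkposreal de Hde); intros u v Hu Hv; simpl in *.
  rewrite (move_t_coord d1 t x), (move_x_coord d1 t x),
    (move_t_coord d2 t x), (move_x_coord d2 t x).
  destruct (near_move2 de t x d1 d2 u v Hde Hu Hv); auto.
Qed.

Lemma pds_app l l' f : pds l (pds l' f) = pds (l ++ l') f.
Proof. induction l as [|d l IH]; simpl; auto. rewrite IH; auto. Qed.

Section SmoothFields.

Variable U : R -> pt -> Prop.
Hypothesis HU : open4 U.

Lemma locally_line d t x : U t x ->
  locally (coord d t x) (fun r => U (move_t d t r) (move_x d x r)).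
Proof.
  intro Ht; destruct (open4_near U t x HU Ht) as [e [He H]].
  exists (mkposreal e He); intros r Hr; apply H.
  apply near_move; [apply near_refl; exact He | exact Hr].
Qed.

Lemma pd_local d f g t x : U t x ->
  (forall s y, U s y -> f s y = g s y) -> pd d f t x = pd d g t x.
Proof.
  intros Ht Hfg; rewrite !pd_line; apply Derive_ext_loc.
  generalize (locally_line d t x Ht); apply filter_imp; auto.
Qed.

Lemma cont_at_local f g t x : U t x -> (forall s y, U s y -> f s y = g s y) ->
  cont_at f t x -> cont_at g t x.
Proof.
  intros Ht Hfg Hf eps He; destruct (Hf eps He) as [d [Hd H]].
  destruct (open4_near U t x HU Ht) as [e [He' HUe]].
  exists (Rmin d e); split; [apply Rmin_pos; auto|].
  intros s y Hs Hy.
  assert (Hnear : near e t x s y).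
  { split; [|intro i]; eapply Rlt_le_trans; eauto; apply Rmin_r. }
  rewrite <- !Hfg by auto using near_refl.
  apply H; [|intro i]; eapply Rlt_le_trans; eauto; apply Rmin_l.
Qed.

Lemma smooth_ex_line f l d t x : smooth_on U f -> U t x ->
  ex_derive (fun r => pds l f (move_t d t r) (move_x d x r)) (coord d t x).
Proof. intros Hf Ht; destruct (Hf l t x Ht) as [_ [H1 H2]]; destruct d; simpl; auto. Qed.

Lemma smooth_ex_line_at f l d t x u : smooth_on U f -> U (move_t d t u) (move_x d x u) ->
  ex_derive (fun r => pds l f (move_t d t r) (move_x d x r)) u.
Proof.
  intros Hf Ht; generalize (smooth_ex_line f l d _ _ Hf Ht); rewrite coord_move.
  apply ex_derive_ext; intro r; rewrite move_t_move, move_x_move; reflexivity.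
Qed.

Lemma smooth_pds f l : smooth_on U f -> smooth_on U (pds l f).
Proof. intros Hf l' t x Ht; rewrite pds_app; apply Hf; auto. Qed.

Lemma smooth_dsp k f : smooth_on U f -> smooth_on U (dsp k f).
Proof. exact (smooth_pds f [DX k]). Qed.

Lemma pds_lin a b f g l t x : smooth_on U f -> smooth_on U g -> U t x ->
  pds l (fun s y => a * f s y + b * g s y) t x = a * pds l f t x + b * pds l g t x.
Proof.
  intros Hf Hg; revert t x; induction l as [|d l IH]; intros t x Ht; simpl; auto.
  rewrite (pd_local d _ (fun s y => a * pds l f s y + b * pds l g s y)) by auto.
  rewrite !pd_line, Derive_plus, !Derive_scal; auto;
    apply ex_derive_scal; apply smooth_ex_line; auto.
Qed.

Lemma smooth_lin a b f g : smooth_on U f -> smooth_on U g ->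
  smooth_on U (fun s y => a * f s y + b * g s y).
Proof.
  intros Hf Hg l t x Ht.
  assert (E : forall s y, U s y ->
    a * pds l f s y + b * pds l g s y = pds l (fun s y => a * f s y + b * g s y) s y)
    by (intros; rewrite pds_lin; auto).
  assert (Hline : forall d, ex_derive (fun r =>
      pds l (fun s y => a * f s y + b * g s y) (move_t d t r) (move_x d x r)) (coord d t x)).
  { intro d.
    apply (ex_derive_ext_loc (fun r =>
      a * pds l f (move_t d t r) (move_x d x r) + b * pds l g (move_t d t r) (move_x d x r))).
    - generalize (locally_line d t x Ht); apply filter_imp; auto.
    - apply (ex_derive_plus (fun r => a * pds l f (move_t d t r) (move_x d x r))
                            (fun r => b * pds l g (move_t d t r) (move_x d x r)));
        apply ex_derive_scal, smooth_ex_line; auto. }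
  split; [|split].
  - apply (cont_at_local _ _ t x Ht E), cont_lin; [apply Hf|apply Hg]; auto.
  - exact (Hline DT).
  - intro k; exact (Hline (DX k)).
Qed.

Lemma smooth_plus f g : smooth_on U f -> smooth_on U g ->
  smooth_on U (fun s y => f s y + g s y).
Proof.
  intros Hf Hg; replace (fun s y => f s y + g s y) with (fun s y => 1 * f s y + 1 * g s y)
    by (do 2 (apply functional_extensionality; intro); ring).
  apply smooth_lin; auto.
Qed.

Lemma smooth_minus f g : smooth_on U f -> smooth_on U g ->
  smooth_on U (fun s y => f s y - g s y).
Proof.
  intros Hf Hg; replace (fun s y => f s y - g s y) with (fun s y => 1 * f s y + -1 * g s y)
    by (do 2 (apply functional_extensionality; intro); ring).
  apply smooth_lin; auto.
Qed.

Lemma smooth_scal c f : smooth_on U f -> smooth_on U (fun s y => c * f s y).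
Proof.
  intro Hf; replace (fun s y => c * f s y) with (fun s y => c * f s y + 0 * f s y)
    by (do 2 (apply functional_extensionality; intro); ring).
  apply smooth_lin; auto.
Qed.

Lemma smooth_scal_r c f : smooth_on U f -> smooth_on U (fun s y => f s y * c).
Proof.
  intro Hf; replace (fun s y => f s y * c) with (fun s y => c * f s y + 0 * f s y)
    by (do 2 (apply functional_extensionality; intro); ring).
  apply smooth_lin; auto.
Qed.

Section Slice.

Variables (d1 d2 : dir) (t : R) (x : pt).
Hypothesis Hd : d1 <> d2.

Let slice_t u v := move_t d2 (move_t d1 t u) v.
Let slice_x u v := move_x d2 (move_x d1 x u) v.

Lemma slice_t_comm u v : move_t d1 (move_t d2 t v) u = slice_t u v.
Proof. apply move_t_comm; auto. Qed.

Lemma slice_x_comm u v : move_x d1 (move_x d2 x v) u = slice_x u v.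
Proof. apply move_x_comm; auto. Qed.

Lemma Derive_slice_2 g u v :
  Derive (fun w => g (slice_t u w) (slice_x u w)) v = pd d2 g (slice_t u v) (slice_x u v).
Proof. apply pd_line_at. Qed.

Lemma Derive_slice_1 g u v :
  Derive (fun z => g (slice_t z v) (slice_x z v)) u = pd d1 g (slice_t u v) (slice_x u v).
Proof.
  rewrite <- slice_t_comm, <- slice_x_comm, <- pd_line_at.
  apply Derive_ext; intro z; rewrite slice_t_comm, slice_x_comm; reflexivity.
Qed.

Lemma pd_swap f : smooth_on U f -> U t x -> pd d1 (pd d2 f) t x = pd d2 (pd d1 f) t x.
Proof.
  intros Hf Ht.
  set (phi := fun u v => f (slice_t u v) (slice_x u v)).
  set (u0 := coord d1 t x); set (v0 := coord d2 t x).
  assert (L : pd d1 (pd d2 f) t x = Derive (fun z => Derive (fun w => phi z w) v0) u0).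
  { rewrite pd_line; apply Derive_ext; intro z.
    rewrite pd_line, coord_move_other by auto; reflexivity. }
  assert (R : pd d2 (pd d1 f) t x = Derive (fun z => Derive (fun w => phi w z) u0) v0).
  { rewrite pd_line; apply Derive_ext; intro z.
    rewrite pd_line, coord_move_other by congruence.
    apply Derive_ext; intro w; unfold phi; rewrite slice_t_comm, slice_x_comm; reflexivity. }
  rewrite L, R; clear L R.
  destruct (open4_near U t x HU Ht) as [e [He HUe]].
  assert (HP : forall u v, Rabs (u - u0) < e -> Rabs (v - v0) < e -> U (slice_t u v) (slice_x u v))
    by (intros; apply HUe, near_move2; auto).
  apply Schwarz.
  - exists (mkposreal e He); intros u v Hu Hv; simpl in Hu, Hv.
    assert (HUP := HP u v Hu Hv).
    assert (HUP' : U (move_t d1 (move_t d2 t v) u) (move_x d1 (move_x d2 x v) u))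
      by (rewrite slice_t_comm, slice_x_comm; exact HUP).
    split; [|split; [|split]].
    + apply (ex_derive_ext (fun z => pds [] f (move_t d1 (move_t d2 t v) z) (move_x d1 (move_x d2 x v) z))).
      { intro z; unfold phi; rewrite slice_t_comm, slice_x_comm; reflexivity. }
      apply smooth_ex_line_at; auto.
    + apply (smooth_ex_line_at f [] d2 (move_t d1 t u) (move_x d1 x u)); auto.
    + apply (ex_derive_ext (fun z => pds [d2] f (move_t d1 (move_t d2 t v) z) (move_x d1 (move_x d2 x v) z))).
      { intro z; unfold phi; rewrite Derive_slice_2, slice_t_comm, slice_x_comm; reflexivity. }
      apply smooth_ex_line_at; auto.
    + apply (ex_derive_ext (fun z => pds [d1] f (move_t d2 (move_t d1 t u) z) (move_x d2 (move_x d1 x u) z))).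
      { intro z; unfold phi; rewrite Derive_slice_1; reflexivity. }
      apply smooth_ex_line_at; auto.
  - apply (continuity_2d_pt_ext (fun u v => pds [d1; d2] f (slice_t u v) (slice_x u v))).
    { intros u v; unfold phi; simpl; rewrite <- Derive_slice_1.
      apply Derive_ext; intro z; rewrite Derive_slice_2; reflexivity. }
    apply cont_at_slice, Hf; auto.
  - apply (continuity_2d_pt_ext (fun u v => pds [d2; d1] f (slice_t u v) (slice_x u v))).
    { intros u v; unfold phi; simpl; rewrite <- Derive_slice_2.
      apply Derive_ext; intro z; rewrite Derive_slice_1; reflexivity. }
    apply cont_at_slice, Hf; auto.
Qed.

End Slice.

Lemma smooth_symmetric_hessian f t x : smooth_on U f -> U t x -> symmetric_hessian f t x.
Proof.
  intros Hf Ht; split.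
  - intros a k; exact (proj2 (proj2 (Hf [DX a] t x Ht)) k).
  - intros a b; destruct (idx_eq_dec a b) as [->|Hab]; [reflexivity|].
    apply (pd_swap (DX a) (DX b)); auto; congruence.
Qed.

Lemma smooth_partials_exist f t x : smooth_on U f -> U t x -> partials_exist f t x.
Proof. intros Hf Ht k; exact (proj2 (proj2 (Hf [] t x Ht)) k). Qed.

Lemma dtime_mdiv_mtrans (M : mfield) t x l :
  (forall i j, smooth_on U (fun t y => M t y i j)) -> U t x ->
  dtime (fun t y => mdiv (mtrans M) t y l) t x = mdiv (mtrans (mdt M)) t x l.
Proof.
  intros HM Ht; unfold dtime at 1; unfold mdiv, mtrans.
  rewrite Derive_sum3.
  - apply sum3_ext; intro j.
    apply (pd_swap DT (DX j)); auto; discriminate.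
  - intro j; exact (proj1 (proj2 (HM l j [DX j] t x Ht))).
Qed.

End SmoothFields.

Ltac solve_smooth :=
  repeat match goal with
  | |- smooth_on _ (fun t y => @?F t y + @?G t y) => apply smooth_plus with (f := F) (g := G)
  | |- smooth_on _ (fun t y => @?F t y - @?G t y) => apply smooth_minus with (f := F) (g := G)
  | |- smooth_on _ (fun t y => ?C * @?F t y) => apply smooth_scal with (c := C) (f := F)
  | |- smooth_on _ (fun t y => @?F t y * ?C) => apply smooth_scal_r with (c := C) (f := F)
  | |- smooth_on _ (fun t y => dsp ?K ?F t y) => apply smooth_dsp with (k := K) (f := F)
  end;
  auto.

(** * Time integrals *)

Lemma ex_RInt_sum3 (G : idx -> R -> R) a b : (forall k, ex_RInt (G k) a b) ->
  ex_RInt (fun s => sum3 (fun k => G k s)) a b.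
Proof.
  intro HG; unfold sum3.
  apply (ex_RInt_plus (fun s => G I0 s + G I1 s) (G I2)); auto.
  apply (ex_RInt_plus (G I0) (G I1)); auto.
Qed.

Lemma RInt_sum3 (G : idx -> R -> R) a b : (forall k, ex_RInt (G k) a b) ->
  RInt (fun s => sum3 (fun k => G k s)) a b = sum3 (fun k => RInt (G k) a b).
Proof.
  intro HG; unfold sum3.
  rewrite (RInt_plus (V := R_CompleteNormedModule) (fun s => G I0 s + G I1 s) (G I2)); auto.
  - rewrite (RInt_plus (V := R_CompleteNormedModule) (G I0) (G I1)); auto.
  - apply (ex_RInt_plus (G I0) (G I1)); auto.
Qed.

Lemma RInt_sum3_sum3 (c : idx -> idx -> R) (G : idx -> idx -> R -> R) a b :
  (forall k m, ex_RInt (G k m) a b) ->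
  RInt (fun s => sum3 (fun k => sum3 (fun m => c k m * G k m s))) a b
  = sum3 (fun k => sum3 (fun m => c k m * RInt (G k m) a b)).
Proof.
  intro HG.
  assert (Hc : forall k m, ex_RInt (fun s => c k m * G k m s) a b)
    by (intros; apply (ex_RInt_scal (G k m)); auto).
  rewrite RInt_sum3 by (intro; apply ex_RInt_sum3; auto).
  apply sum3_ext; intro k; rewrite RInt_sum3 by auto.
  apply sum3_ext; intro m; apply (RInt_scal (V := R_CompleteNormedModule)); auto.
Qed.

Definition vprimitive (c : R) (F V : vfield) : vfield :=
  fun t y i => c * RInt (fun s => F s y i) 0 t + V 0 y i.

Definition vdsp (k : idx) (F : vfield) : vfield :=
  fun t y i => dsp k (fun t y => F t y i) t y.

Section TimeIntegrals.

Variables (Omega : pt -> Prop) (U : R -> pt -> Prop) (T : R).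
Hypotheses (HOmega : open3 Omega) (HU : open4 U)
  (HUOmega : forall t x, 0 <= t <= T -> Omega x -> U t x).

Lemma ex_RInt_smooth f t y : smooth_on U f -> 0 <= t <= T -> Omega y ->
  ex_RInt (fun s => f s y) 0 t.
Proof.
  intros Hf Ht Hy; apply (ex_RInt_continuous (V := R_CompleteNormedModule)).
  intros s Hs; rewrite Rmin_left, Rmax_right in Hs by lra.
  apply cont_at_time, (Hf []), HUOmega; auto; lra.
Qed.

Lemma smooth_FTC f t y : smooth_on U f -> 0 <= t <= T -> Omega y ->
  f t y = f 0 y + RInt (fun s => dtime f s y) 0 t.
Proof.
  intros Hf Ht Hy.
  assert (HUs : forall s, Rmin 0 t <= s <= Rmax 0 t -> U s y)
    by (intros s Hs; rewrite Rmin_left, Rmax_right in Hs by lra; apply HUOmega; auto; lra).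
  change (RInt (fun s => dtime f s y) 0 t) with (RInt (Derive (fun s => f s y)) 0 t).
  rewrite RInt_Derive; [ring| |].
  - intros s Hs; exact (proj1 (proj2 (Hf [] s y (HUs s Hs)))).
  - intros s Hs; exact (cont_at_time _ _ _ (proj1 (Hf [DT] s y (HUs s Hs)))).
Qed.

Lemma is_derive_RInt_dsp F k t y : smooth_on U F -> 0 <= t <= T -> Omega y ->
  is_derive (fun r => RInt (fun s => F s (upd y k r)) 0 t) (y k)
    (RInt (fun s => dsp k F s y) 0 t).
Proof.
  intros HF Ht Hy.
  apply (is_derive_RInt_param (fun u s => F s (upd y k u)) 0 t (y k)).
  - generalize (open3_line Omega y k HOmega Hy); apply filter_imp; intros r Hr s Hs.
    rewrite Rmin_left, Rmax_right in Hs by lra.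
    apply (smooth_ex_line_at U F [] (DX k) s y r HF); simpl; apply HUOmega; auto; lra.
  - intros s Hs; rewrite Rmin_left, Rmax_right in Hs by lra.
    apply (continuity_2d_pt_ext (fun u v => dsp k F v (upd y k u))).
    { intros u v; symmetry; apply (pd_line_at (DX k) F v y u). }
    apply (cont_at_slice (dsp k F) s y (DX k) DT), (HF [DX k]), HUOmega; auto; lra.
  - generalize (open3_line Omega y k HOmega Hy); apply filter_imp; intros r Hr.
    apply ex_RInt_smooth; auto.
Qed.

Section Primitive.

Variables (c : R) (F V : vfield).
Hypotheses (HF : forall i, smooth_on U (fun t y => F t y i))
  (HV : forall i, smooth_on U (fun t y => V t y i)).

Lemma is_derive_vprimitive k t y i : 0 <= t <= T -> Omega y ->
  is_derive (fun r => vprimitive c F V t (upd y k r) i) (y k)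
    (vprimitive c (vdsp k F) (vdsp k V) t y i).
Proof.
  intros Ht Hy; unfold vprimitive, vdsp.
  apply (is_derive_plus (fun r => c * RInt (fun s => F s (upd y k r) i) 0 t)
                        (fun r => V 0 (upd y k r) i)).
  - apply is_derive_scal, (is_derive_RInt_dsp (fun t y => F t y i)); auto.
  - apply Derive_correct, (smooth_partials_exist U (fun t y => V t y i)), HUOmega; auto; lra.
Qed.

Lemma dsp_vprimitive k t y i : 0 <= t <= T -> Omega y ->
  dsp k (fun t y => vprimitive c F V t y i) t y = vprimitive c (vdsp k F) (vdsp k V) t y i.
Proof. intros; apply is_derive_unique, is_derive_vprimitive; auto. Qed.

Lemma vcurl_vprimitive t y i : 0 <= t <= T -> Omega y ->
  vcurl (vprimitive c F V) t y i = c * RInt (fun s => vcurl F s y i) 0 t + vcurl V 0 y i.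
Proof.
  intros Ht Hy.
  transitivity (sum3 (fun k => sum3 (fun m => levi i k m * vprimitive c (vdsp k F) (vdsp k V) t y m))).
  { apply sum3_ext; intro k; apply sum3_ext; intro m; f_equal; apply dsp_vprimitive; auto. }
  assert (HI : RInt (fun s => vcurl F s y i) 0 t = sum3 (fun k => sum3 (fun m =>
      levi i k m * RInt (fun s => dsp k (fun t y => F t y m) s y) 0 t))).
  { apply (RInt_sum3_sum3 (fun k m => levi i k m) (fun k m s => dsp k (fun t y => F t y m) s y)).
    intros k m; apply (ex_RInt_smooth (dsp k (fun t y => F t y m))); auto; apply smooth_dsp; auto. }
  rewrite HI; unfold vcurl, vprimitive, vdsp, sum3; ring.
Qed.

End Primitive.

Lemma symmetric_hessian_vprimitive c (F V : vfield) t x i :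
  (forall i, smooth_on U (fun t y => F t y i)) -> (forall i, smooth_on U (fun t y => V t y i)) ->
  0 <= t <= T -> Omega x -> symmetric_hessian (fun t y => vprimitive c F V t y i) t x.
Proof.
  intros HF HV Ht Hx.
  assert (HdF : forall a i, smooth_on U (fun t y => vdsp a F t y i)) by (intros; apply smooth_dsp; auto).
  assert (HdV : forall a i, smooth_on U (fun t y => vdsp a V t y i)) by (intros; apply smooth_dsp; auto).
  assert (Hd1 : forall a y, Omega y -> dsp a (fun t y => vprimitive c F V t y i) t y
                                      = vprimitive c (vdsp a F) (vdsp a V) t y i)
    by (intros; apply dsp_vprimitive; auto).
  split.
  - intros a k.
    apply (ex_derive_ext_loc (fun r => vprimitive c (vdsp a F) (vdsp a V) t (upd x k r) i)).
    + generalize (open3_line Omega x k HOmega Hx); apply filter_imp; intros r Hr.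
      symmetry; apply Hd1; auto.
    + eexists; apply is_derive_vprimitive; auto.
  - intros a b.
    rewrite (dsp_local Omega a _ (fun t y => vprimitive c (vdsp b F) (vdsp b V) t y i)),
      (dsp_local Omega b _ (fun t y => vprimitive c (vdsp a F) (vdsp a V) t y i)),
      !dsp_vprimitive by auto.
    unfold vprimitive, vdsp; f_equal.
    + f_equal; apply RInt_ext; intros s Hs; rewrite Rmin_left, Rmax_right in Hs by lra.
      apply (smooth_symmetric_hessian U); auto; apply HUOmega; auto; lra.
    + apply (smooth_symmetric_hessian U); auto; apply HUOmega; auto; lra.
Qed.

Section System.

Variables (A gamma : mfield).
Hypotheses (HA : forall i j, smooth_on U (fun t x => A t x i j))
  (Hgamma : forall i j, smooth_on U (fun t x => gamma t x i j))
  (Hsym : forall t x, 0 <= t <= T -> Omega x -> forall i j, gamma t x i j = gamma t x j i)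
  (HdivA : forall t x, 0 <= t <= T -> Omega x -> forall i, mdiv A t x i = 0)
  (HAt : forall t x, 0 <= t <= T -> Omega x -> forall i j,
      mdt A t x i j + mcurl (Sf gamma) t x i j = 0).

Lemma smooth_Sf_gamma a b : smooth_on U (fun t y => Sf gamma t y a b).
Proof. unfold Sf, Sop, mtr, sum3; solve_smooth. Qed.

Lemma smooth_mdiv_Sf_gamma i : smooth_on U (fun t y => mdiv (Sf gamma) t y i).
Proof. unfold mdiv, sum3; solve_smooth; apply smooth_Sf_gamma. Qed.

Lemma smooth_vcurl_mdiv_Sf_gamma i : smooth_on U (fun t y => vcurl (mdiv (Sf gamma)) t y i).
Proof. unfold vcurl, sum3; solve_smooth; apply smooth_mdiv_Sf_gamma. Qed.

Lemma smooth_vskw_A i : smooth_on U (fun t y => vskw (A t y) i).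
Proof. unfold vskw, sum3; solve_smooth. Qed.

Lemma smooth_mdiv_mtrans_A i : smooth_on U (fun t y => mdiv (mtrans A) t y i).
Proof. unfold mdiv, mtrans, sum3; solve_smooth. Qed.

Lemma Sf_gamma_sym t y a b : 0 <= t <= T -> Omega y -> Sf gamma t y a b = Sf gamma t y b a.
Proof. intros Ht Hy; unfold Sf, Sop; rewrite (Hsym t y Ht Hy a b), kron_sym; reflexivity. Qed.

Lemma dtime_mdiv_mtrans_A t y l : 0 <= t <= T -> Omega y ->
  dtime (fun t y => mdiv (mtrans A) t y l) t y = - vcurl (mdiv (Sf gamma)) t y l.
Proof.
  intros Ht Hy.
  rewrite (dtime_mdiv_mtrans U) by auto.
  transitivity (mdiv (fun t y a b => - mtrans (mcurl (Sf gamma)) t y a b) t y l).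
  { apply (mdiv_local Omega); auto; intros y' Hy' a b.
    unfold mtrans; specialize (HAt t y' Ht Hy' b a); lra. }
  rewrite mdiv_opp, mdiv_mtrans_mcurl
    by (intros; apply (smooth_symmetric_hessian U); auto using smooth_Sf_gamma).
  f_equal; apply (vcurl_local Omega); auto; intros y' Hy' m.
  apply (mdiv_local Omega); auto; intros y'' Hy'' a b.
  apply Sf_gamma_sym; auto.
Qed.

Lemma mdiv_mtrans_A_initial y l : 0 <= T -> Omega y ->
  mdiv (mtrans A) 0 y l = -2 * vcurl (fun t y => vskw (A t y)) 0 y l.
Proof.
  intros HT Hy.
  assert (H0 : 0 <= 0 <= T) by lra.
  assert (Hcurl := vcurl_vskw 0 y A l
    (fun l m => smooth_partials_exist U _ 0 y (HA l m) (HUOmega 0 y H0 Hy))).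
  rewrite (HdivA 0 y H0 Hy) in Hcurl; lra.
Qed.

Lemma mdiv_mtrans_A_vcurl_beta t y l : 0 <= t <= T -> Omega y ->
  mdiv (mtrans A) t y l
  = -2 * vcurl (vprimitive (1/2) (mdiv (Sf gamma)) (fun t y => vskw (A t y))) t y l.
Proof.
  intros Ht Hy.
  rewrite vcurl_vprimitive by auto using smooth_mdiv_Sf_gamma, smooth_vskw_A.
  assert (Hftc := smooth_FTC (fun t y => mdiv (mtrans A) t y l) t y
                    (smooth_mdiv_mtrans_A l) Ht Hy).
  cbv beta in Hftc.
  rewrite mdiv_mtrans_A_initial in Hftc by (auto; lra).
  assert (Hint : RInt (fun s => dtime (fun t y => mdiv (mtrans A) t y l) s y) 0 t
                 = - RInt (fun s => vcurl (mdiv (Sf gamma)) s y l) 0 t).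
  { transitivity (RInt (fun s => - vcurl (mdiv (Sf gamma)) s y l) 0 t).
    - apply RInt_ext; intros s Hs; rewrite Rmin_left, Rmax_right in Hs by lra.
      apply dtime_mdiv_mtrans_A; auto; lra.
    - apply (RInt_opp (V := R_CompleteNormedModule)).
      exact (ex_RInt_smooth _ t y (smooth_vcurl_mdiv_Sf_gamma l) Ht Hy). }
  lra.
Qed.

End System.

End TimeIntegrals.

Theorem lemma2p5
  (Omega : pt -> Prop) (T : R) (A gamma : mfield) (U : R -> pt -> Prop) :
  open3 Omega ->
  0 < T ->
  (* smoothness: classical C^oo fields on an open neighbourhood U of [0,T] x Omega *)
  open4 U ->
  (forall t x, 0 <= t <= T -> Omega x -> U t x) ->
  (forall i j, smooth_on U (fun t x => A t x i j)) ->
  (forall i j, smooth_on U (fun t x => gamma t x i j)) ->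
  (* A takes values in trace-free, gamma in symmetric matrices *)
  (forall t x, 0 <= t <= T -> Omega x -> mtr (A t x) = 0) ->
  (forall t x, 0 <= t <= T -> Omega x -> forall i j, gamma t x i j = gamma t x j i) ->
  (* the system *)
  (forall t x, 0 <= t <= T -> Omega x -> forall i, mdiv A t x i = 0) ->
  (forall t x, 0 <= t <= T -> Omega x -> forall i j,
      mdt A t x i j + mcurl (Sf gamma) t x i j = 0) ->
  (forall t x, 0 <= t <= T -> Omega x -> forall i j,
      mdt (Sf gamma) t x i j - symf (mcurl A) t x i j = 0) ->
  (forall t x, 0 <= t <= T -> Omega x -> divdiv (Sf gamma) t x = 0) ->
  let beta : vfield := fun t x i =>
    (1/2) * RInt (fun s => mdiv (Sf gamma) s x i) 0 t + vskw (A 0 x) i in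
  forall t x, 0 <= t <= T -> Omega x -> forall i,
    mdiv (mdt (Sf gamma)) t x i = 2 * mdiv (Sf (vdef beta)) t x i.
Proof.
  intros HOmega _ HU HUOmega HA Hgamma _ Hsym HdivA HAt HSt _ beta t x Ht Hx i.
  change beta with (vprimitive (1/2) (mdiv (Sf gamma)) (fun t y => vskw (A t y))).
  set (P := vprimitive (1/2) (mdiv (Sf gamma)) (fun t y => vskw (A t y))).
  assert (HUtx : U t x) by auto.
  rewrite (mdiv_local Omega (mdt (Sf gamma)) (symf (mcurl A)) t x i)
    by (auto; intros y Hy a b; specialize (HSt t y Ht Hy a b); lra).
  assert (Hsc := mdiv_symf_mcurl t x A i
    (fun l m => smooth_symmetric_hessian U HU _ t x (HA l m) HUtx)).
  assert (Hw : vcurl (mdiv (mtrans A)) t x i = -2 * vcurl (vcurl P) t x i).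
  { rewrite <- vcurl_scal; apply (vcurl_local Omega); auto; intros y Hy l.
    apply (mdiv_mtrans_A_vcurl_beta Omega U T); auto. }
  assert (Hdef : 2 * mdiv (Sf (vdef P)) t x i = - vcurl (vcurl P) t x i).
  { apply mdiv_Sf_vdef; intro l.
    apply (symmetric_hessian_vprimitive Omega U T);
      auto using smooth_mdiv_Sf_gamma, smooth_vskw_A. }
  lra.
Qed.
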